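(* Let $F=\begin{pmatrix}1&0&-1\\0&0&0\\-1&0&1\end{pmatrix}$ (edge detect A filter). Then for all $m,n\in\mathbb{N}$, it is not the case that the equation $F*X=B$ with the periodic boundary condition, for unknown $X\in\mathbb{R}^{m\times n}$, has a unique solution for every $B\in\mathbb{R}^{m\times n}$.
   Context: For $F=[f_{ij}]\in\mathbb{R}^{3\times3}$ and $X=[x_{ij}]\in\mathbb{R}^{m\times n}$, the convolution $F*X\in\mathbb{R}^{m\times n}$ is defined by $[F*X]_{ij}=\sum_{l_1=1}^3\sum_{l_2=1}^3 f_{l_1l_2}\,x_{i-l_1+2,\,j-l_2+2}$ for $1\le i\le m$, $1\le j\le n$, where the periodic boundary condition sets $x_{0j}=x_{mj}$, $x_{m+1,j}=x_{1j}$, $x_{i0}=x_{in}$, $x_{i,n+1}=x_{i1}$ (for all indices $i\in\{0,\dots,m+1\}$, $j\in\{0,\dots,n+1\}$, so corners are also determined, e.g. $x_{00}=x_{mn}$). *)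

From HB Require Import structures.
From mathcomp Require Import all_boot all_order all_algebra.
From mathcomp Require Import reals.
Set Implicit Arguments. Unset Strict Implicit. Unset Printing Implicit Defensive.
Import Order.TTheory GRing.Theory Num.Theory.
Local Open Scope ring_scope.

(* 0-indexed periodic index: for i : 'I_m (paper's row i+1) and k : 'I_3
   (paper's l = k+1), the paper's index i - l + 2 becomes, 0-indexed,
   (i + 1 - k) taken mod m; we write it as (i + m + 1 - k) %% m to avoid
   truncated subtraction. *)
Definition per_idx (m : nat) (i : 'I_m) (k : 'I_3) : 'I_m :=
  Ordinal (@ltn_pmod (i + m + 1 - k)%N m (leq_ltn_trans (leq0n i) (ltn_ord i))).

Definition pconv (R : pzRingType) (m n : nat) (F : 'M[R]_3) (X : 'M[R]_(m, n))
  : 'M[R]_(m, n) :=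
  \matrix_(i < m, j < n)
     \sum_(k1 < 3) \sum_(k2 < 3) F k1 k2 * X (per_idx i k1) (per_idx j k2).

Definition edgeA (R : pzRingType) : 'M[R]_3 :=
  \matrix_(i < 3, j < 3)
    match nat_of_ord i, nat_of_ord j with
    | 0, 0 => 1 | 0, 2 => -1 | 2, 0 => -1 | 2, 2 => 1 | _, _ => 0
    end.

From HB Require Import structures.
From mathcomp Require Import all_boot all_order all_algebra.
From mathcomp Require Import reals.
Import GRing.Theory Num.Theory.
Local Open Scope ring_scope.

(* The entries of the edge detect A filter sum to zero, so it annihilates
   every constant matrix; the constant matrices 0 and 1 then have the same
   image, which rules out uniqueness of solutions of F * X = 0. *)

Lemma pconv_const (R : pzRingType) (m n : nat) (F : 'M[R]_3) (c : R) :
  pconv F (const_mx c : 'M[R]_(m, n)) =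
  const_mx ((\sum_(k1 < 3) \sum_(k2 < 3) F k1 k2) * c).
Proof.
apply/matrixP => i j; rewrite !mxE mulr_suml.
by apply: eq_bigr => k1 _; rewrite mulr_suml; apply: eq_bigr => k2 _; rewrite mxE.
Qed.

Lemma edgeA_sum (R : pzRingType) : \sum_(k1 < 3) \sum_(k2 < 3) edgeA R k1 k2 = 0.
Proof. by rewrite !big_ord_recl !big_ord0 !mxE /= !addr0 !add0r subrr addNr addr0. Qed.

Lemma pconv_edgeA_const (R : pzRingType) (m n : nat) (c : R) :
  pconv (edgeA R) (const_mx c : 'M[R]_(m, n)) = 0.
Proof. by rewrite pconv_const edgeA_sum mul0r; apply/matrixP => i j; rewrite !mxE. Qed.

Theorem corollary8 (R : realType) (m n : nat) (hm : (0 < m)%N) (hn : (0 < n)%N) :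
  ~ (forall B : 'M[R]_(m, n), exists! X : 'M[R]_(m, n), pconv (edgeA R) X = B).
Proof.
move=> /(_ 0) [X [_ X_unique]].
have X_eq1 := X_unique _ (pconv_edgeA_const R m n 1).
have X_eq0 := X_unique _ (pconv_edgeA_const R m n 0).
have /matrixP/(_ (Ordinal hm) (Ordinal hn)) : const_mx 1 = const_mx 0 :> 'M[R]_(m, n).
  by rewrite -X_eq1 -X_eq0.
by rewrite !mxE => /eqP; rewrite oner_eq0.
Qed.
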